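(* Let $I\subseteq R$ be a good ideal, let $a_1,\dots,a_n\in\mathbb N$ with $a=a_1+\dots+a_n$, and let $t\ge1$ be an integer. Then $$I^{a+t}:\langle\mu_1^{a_1}\cdots\mu_n^{a_n}\rangle=\sum_{\substack{t_1,\dots,t_n\ge0\\ t_1+\dots+t_n=t-1}}\mu_1^{t_1}\cdots\mu_n^{t_n}\, I_{t_1+a_1,\dots,t_n+a_n}.$$
   Context: Let $\mathbb K$ be a field, $R=\mathbb K[x_1,\dots,x_n]$, $\mathfrak m=\langle x_1,\dots,x_n\rangle$, $\mathbb N=\{0,1,2,\dots\}$. A monomial $x_1^{\alpha_1}\cdots x_n^{\alpha_n}$ is identified with the point $(\alpha_1,\dots,\alpha_n)\in\mathbb N^n$. For a monomial ideal $I$, $G(I)$ denotes its (unique) minimal monomial generating set. If $I$ is an $\mathfrak m$-primary monomial ideal, then for each $i$ there is a unique $d_i\ge1$ with $x_i^{d_i}\in G(I)$; write $\mu_i=x_i^{d_i}$. For $(a_1,\dots,a_n)\in\mathbb N^n$ the box associated to $I$ is $B_{a_1,\dots,a_n}=([a_1d_1,(a_1+1)d_1]\times\cdots\times[a_nd_n,(a_n+1)d_n])\cap\mathbb N^n$; a monomial belongs to a box if its exponent vector does. An $\mathfrak m$-primary monomial ideal $I$ is called good if for every integer $l\ge1$, every element of $G(I^l)$ belongs to some box $B_{a_1,\dots,a_n}$ with $a_1+\dots+a_n=l-1$. For a good ideal $I$ and $a=(a_1,\dots,a_n)\in\mathbb N^n$, with $l=a_1+\dots+a_n+1$, define $I_{a_1,\dots,a_n}=\left\langle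 \frac{m}{\mu_1^{a_1}\cdots\mu_n^{a_n}} : m\in B_{a_1,\dots,a_n}\cap G(I^l)\right\rangle$. *)

(* Monomial ideals of K[x_1,...,x_n] are modelled
   combinatorially by their sets of monomials (exponent vectors in N^n).
   A monomial x^u is identified with u : 'I_n -> nat. *)
From mathcomp Require Import all_boot.
Set Implicit Arguments. Unset Strict Implicit. Unset Printing Implicit Defensive.

Definition mon (n : nat) := 'I_n -> nat.
Definition mideal (n : nat) := mon n -> Prop.

Definition mzero (n : nat) : mon n := fun _ => 0.
Definition madd (n : nat) (u v : mon n) : mon n := fun i => u i + v i.
Definition mdvd (n : nat) (u v : mon n) : Prop := forall i, u i <= v i.
Definition xpow (n : nat) (i : 'I_n) (k : nat) : mon n :=
  fun j => if j == i then k else 0.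
(* mu_1^{a_1} ... mu_n^{a_n} = x_1^{a_1 d_1} ... x_n^{a_n d_n} *)
Definition mu_pow (n : nat) (d a : mon n) : mon n := fun i => a i * d i.

Definition is_monideal (n : nat) (I : mideal n) : Prop :=
  forall u v, I u -> mdvd u v -> I v.

Definition mgen (n : nat) (S : mon n -> Prop) : mideal n :=
  fun v => exists2 u, S u & mdvd u v.

Definition mingens (n : nat) (I : mideal n) : mon n -> Prop :=
  fun u => I u /\ (forall w, I w -> mdvd w u -> mdvd u w).

Definition mpow (n : nat) (I : mideal n) (l : nat) : mideal n :=
  fun v => exists f : 'I_l -> mon n,
    (forall j, I (f j)) /\ mdvd (fun i => \sum_(j < l) f j i) v.

Definition mcolon (n : nat) (J : mideal n) (u : mon n) : mideal n :=
  fun v => J (madd v u).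

Definition mmul (n : nat) (u : mon n) (J : mideal n) : mideal n :=
  mgen (fun w => exists2 v, J v & forall i, w i = u i + v i).

(* sum of the monomial ideals F t over the indices t with P t: a monomial
   lies in a sum of monomial ideals iff it lies in one of them *)
Definition msum (n : nat) (P : mon n -> Prop) (F : mon n -> mideal n)
  : mideal n := fun v => exists2 t, P t & F t v.

Definition in_box (n : nat) (d a m : mon n) : Prop :=
  forall i, a i * d i <= m i <= (a i).+1 * d i.

Definition m_primary_with (n : nat) (I : mideal n) (d : mon n) : Prop :=
  [/\ is_monideal I, ~ I (@mzero n) & forall i, mingens I (xpow i (d i))].

Definition good (n : nat) (I : mideal n) (d : mon n) : Prop :=
  m_primary_with I d /\
  (forall l, 0 < l -> forall m, mingens (mpow I l) m ->
     exists2 a : mon n, \sum_(i < n) a i = l.-1 & in_box d a m).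

Definition Isub (n : nat) (I : mideal n) (d a : mon n) : mideal n :=
  mgen (fun u => exists2 m,
          in_box d a m /\ mingens (mpow I (\sum_(i < n) a i).+1) m
          & forall i, u i = m i - a i * d i).

(* x^v lies in I^(|a|+t) : mu^a iff x^v mu^a is divisible by a minimal generator
   m of I^(|a|+t).  Goodness puts m in a box B_b with |b| = |a|+t-1; if b >= a,
   then m/mu^a is a generator of mu^(b-a) I_b.  Otherwise m is replaced by a
   corner mu^e with a <= e <= max(a, b) and |e| = |a|+t: it still divides
   x^v mu^a, lies in the box B_(e - e_j) for any j with a_j < e_j, and is a
   minimal generator of I^|e| because I is good. *)

From mathcomp Require Import all_boot zify.
From Stdlib Require Import Classical FunctionalExtensionality.
Set Implicit Arguments. Unset Strict Implicit. Unset Printing Implicit Defensive.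

Section ExponentVectors.
Variable n : nat.
Implicit Types (u v w x y : mon n).

Definition mdeg u : nat := \sum_(i < n) u i.
Definition msub u v : mon n := fun i => u i - v i.

Lemma mdvd_trans x y w : mdvd x y -> mdvd y w -> mdvd x w.
Proof. by move=> xy yw i; apply: leq_trans (xy i) (yw i). Qed.

Lemma mdeg_madd u v : mdeg (madd u v) = mdeg u + mdeg v.
Proof. exact: big_split. Qed.

Lemma mdegMn p u : mdeg (fun i => p * u i) = p * mdeg u.
Proof. by rewrite /mdeg big_distrr. Qed.

Lemma mdeg_mzero : mdeg (@mzero n) = 0.
Proof. exact: big1. Qed.

Lemma mdeg_xpow i k : mdeg (xpow i k) = k.
Proof. by rewrite /mdeg (bigD1 i) //= /xpow eqxx big1 ?addn0 // => j /negbTE ->. Qed.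

Lemma msubK u v : mdvd u v -> madd (msub v u) u = v.
Proof. by move=> uv; apply: functional_extensionality => i; rewrite /madd subnK. Qed.

Lemma leq_mdeg_add u v i k : mdvd u v -> u i + k <= v i -> mdeg u + k <= mdeg v.
Proof.
move=> uv uvi; rewrite /mdeg (bigD1 i) //= [leqRHS](bigD1 i) //= addnAC.
by apply: leq_add => //; apply: leq_sum.
Qed.

Lemma leq_coord_mdeg u i : u i <= mdeg u.
Proof. by rewrite /mdeg (bigD1 i) //= leq_addr. Qed.

Lemma mdeg_ltn u v i : mdvd u v -> u i < v i -> mdeg u < mdeg v.
Proof. by move=> uv uvi; rewrite -addn1 (leq_mdeg_add (i:=i) uv) ?addn1. Qed.

Lemma mdeg_ltn_exists u v : mdeg u < mdeg v -> exists i, u i < v i.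
Proof.
move=> lt_uv; apply/existsP; apply: contraLR lt_uv => /existsPn le_vu.
by rewrite -leqNgt; apply: leq_sum => i _; rewrite leqNgt le_vu.
Qed.

Lemma not_mdvd u v : ~ mdvd u v -> exists i, v i < u i.
Proof.
move=> nuv; apply/existsP; apply: contraNT (introN forallP nuv) => /existsPn.
by move=> le_vu; apply/forallP => i; rewrite leqNgt le_vu.
Qed.

Lemma mdvd_mdeg_pred x y : mdvd x y -> mdeg x < mdeg y ->
  exists j y', [/\ mdvd x y', mdeg y' = (mdeg y).-1 & y = madd y' (xpow j 1)].
Proof.
move=> xy /mdeg_ltn_exists [j lt_xy]; exists j, (msub y (xpow j 1)).
have yK : y = madd (msub y (xpow j 1)) (xpow j 1).
  by apply: functional_extensionality => i; rewrite /madd /msub /xpow; case: eqP => [->|_]; lia.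
split=> //; last by rewrite [in RHS]yK mdeg_madd mdeg_xpow addn1.
by move=> i; have := xy i; rewrite /msub /xpow; case: eqP => [->|_]; lia.
Qed.

Lemma mdvd_mdeg_between x y k : mdvd x y -> mdeg x <= k <= mdeg y ->
  exists b, [/\ mdvd x b, mdvd b y & mdeg b = k].
Proof.
move gap: (mdeg y - k) => s; elim: s y gap => [|s IH] y gap xy /andP[xk ky].
  by exists y; split=> //; lia.
have [j [y' [xy' deg_y' ->]]] := mdvd_mdeg_pred xy ltac:(lia).
have [b [xb by' deg_b]] : exists b, [/\ mdvd x b, mdvd b y' & mdeg b = k].
  by apply: IH => //; rewrite deg_y'; lia.
by exists b; split=> // i; apply: leq_trans (by' i) _; rewrite /madd leq_addr.
Qed.

Lemma mingens_exists (J : mideal n) u : J u -> exists2 m, mingens J m & mdvd m u.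
Proof.
move deg_u: (mdeg u) => s; elim/ltn_ind: s u deg_u => s IH u deg_u Ju.
have [minu|nminu] := classic (mingens J u); first by exists u.
have [w [Jw wu nuw]] : exists w, [/\ J w, mdvd w u & ~ mdvd u w].
  apply: NNPP => none; apply: nminu; split=> // w Jw wu.
  by apply: NNPP => nuw; apply: none; exists w.
have [i lt_wi] := not_mdvd nuw.
have [|m Jm mw] := IH (mdeg w) _ w erefl Jw; first by rewrite -deg_u (mdeg_ltn wu lt_wi).
by exists m => //; apply: mdvd_trans mw wu.
Qed.
End ExponentVectors.

Section Powers.
Variables (n : nat) (I : mideal n).

Lemma mpow_monideal l : is_monideal (mpow I l).
Proof. by move=> u v [f [If fu]] uv; exists f; split=> // i; apply: leq_trans (fu i) (uv i). Qed.

Lemma mpow0 v : mpow I 0 v.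
Proof. by exists (fun _ => @mzero n); split=> [[]//|i]; rewrite big_ord0. Qed.

Lemma mpow1 u : I u -> mpow I 1 u.
Proof. by move=> Iu; exists (fun _ => u); split=> // i; rewrite big_ord1. Qed.

Lemma mpowD p q u w : mpow I p u -> mpow I q w -> mpow I (p + q) (madd u w).
Proof.
move=> [f [If fu]] [g [Ig gw]].
exists (fun j => match split j with inl j1 => f j1 | inr j2 => g j2 end).
split=> [j|i]; first by case: (split j).
rewrite big_split_ord /=; apply: leq_add.
- by under eq_bigr => j _ do rewrite (unsplitK (inl j)); apply: fu.
- by under eq_bigr => j _ do rewrite (unsplitK (inr j)); apply: gw.
Qed.

Lemma mpowMn l p u : mpow I l u -> mpow I (p * l) (fun i => p * u i).
Proof.
move=> Iu; elim: p => [|p IH]; first exact: mpow0.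
rewrite mulSn; apply: mpow_monideal (mpowD Iu IH) _ => i.
by rewrite /madd mulSn.
Qed.

Lemma mpow_mu_pow d b : (forall i, I (xpow i (d i))) -> mpow I (mdeg b) (mu_pow d b).
Proof.
move=> Ix; move deg_b: (mdeg b) => k; elim: k b deg_b => [|k IH] b deg_b; first exact: mpow0.
have [|j [b' [_ deg_b' ->]]] := mdvd_mdeg_pred (x := @mzero n) (y := b) (fun _ => isT).
  by rewrite mdeg_mzero deg_b.
rewrite -addn1; apply: mpow_monideal (mpowD (IH b' _) (mpow1 (Ix j))) _ => [|i].
  by rewrite deg_b' deg_b.
by rewrite /mu_pow /madd /xpow; case: eqP => [->|_]; rewrite ?mulnDl ?mul1n ?addn0.
Qed.
End Powers.

Lemma mu_pow_mdvd n (d b c : mon n) : mdvd b c -> mdvd (mu_pow d b) (mu_pow d c).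
Proof. by move=> bc i; apply: leq_mul. Qed.

Lemma in_box_mu_pow_succ n (d b : mon n) j : in_box d b (mu_pow d (madd b (xpow j 1))).
Proof.
by move=> i; rewrite !leq_mul //= /madd /xpow; case: (i == j); rewrite ?addn0 ?addn1.
Qed.

Section GoodIdeal.
Variables (n : nat) (I : mideal n) (d : mon n).

Definition box_mingen (b m : mon n) : Prop :=
  in_box d b m /\ mingens (mpow I (mdeg b).+1) m.

Lemma mmul_Isub tt a v :
  mmul (mu_pow d tt) (Isub I d (madd tt a)) v <->
  exists2 m, box_mingen (madd tt a) m & mdvd m (madd v (mu_pow d a)).
Proof.
rewrite /mmul /Isub /mgen /madd /mu_pow; split.
- move=> [w [v' [u [m [m_box Im] uE] uv'] wE] wv].
  exists m => [|i]; first by split.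
  have := m_box i; have := uE i; have := uv' i; have := wE i; have := wv i.
  by rewrite mulnDl; lia.
- move=> [m [m_box Im] mv]; pose u i := m i - (tt i + a i) * d i.
  exists (fun i => tt i * d i + u i).
    by exists u => //; exists u => //; exists m.
  by move=> i; have := m_box i; have := mv i; rewrite /u mulnDl; lia.
Qed.

Hypothesis goodI : good I d.

Lemma good_exp_gt0 i : 0 < d i.
Proof.
have [[Imon I0 Ix] _] := goodI; rewrite lt0n; apply/eqP => d_i0.
apply: I0; apply: (Imon _ _ (proj1 (Ix i))) => j.
by rewrite /xpow /mzero d_i0; case: (j == i).
Qed.

(* If w | mu^b were a proper divisor in I^|b| with w_k < b_k d_k, then the
   boxes of the generators below w^p in I^(p|b|), p = d_k + 1, would have
   total index at most p|b| - 2 instead of p|b| - 1. *)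
Lemma mingens_mu_pow b : mingens (mpow I (mdeg b)) (mu_pow d b).
Proof.
have [[_ _ Ix] boxed] := goodI.
split=> [|w Iw wb k]; first by apply: mpow_mu_pow => i; case: (Ix i).
rewrite leqNgt; apply/negP => lt_wk.
pose p := (d k).+1.
have deg_gt0 : 0 < p * mdeg b.
  rewrite muln_gt0 /=; apply: leq_trans (leq_coord_mdeg b k).
  by move: lt_wk; rewrite /mu_pow lt0n; case: (b k).
have [m Im mw] := mingens_exists (mpowMn p Iw).
have [c deg_c c_box] := boxed _ deg_gt0 m Im.
have c_pb : mdvd c (fun q => p * b q).
  move=> q; rewrite -(leq_pmul2r (good_exp_gt0 q)) -mulnA.
  apply: leq_trans (proj1 (andP (c_box q))) (leq_trans (mw q) _).
  by rewrite leq_mul2l wb orbT.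
have c_pb_k : c k + 2 <= p * b k.
  rewrite leqNgt; apply/negP => /(leq_mul (leqnn (d k))) big_ck.
  have := leq_mul (leqnn p) lt_wk; have := proj1 (andP (c_box k)); have := mw k.
  by move: big_ck; rewrite /mu_pow /p; nia.
have := leq_mdeg_add c_pb c_pb_k.
by rewrite mdegMn (deg_c : mdeg c = _); lia.
Qed.

Lemma box_mingen_mu_pow L a c : mdvd a c -> mdeg a < L <= mdeg c ->
  exists b e, [/\ mdvd a b, (mdeg b).+1 = L, box_mingen b (mu_pow d e) & mdvd e c].
Proof.
move=> ac /andP[aL Lc].
have [|e [ae ec deg_e]] := mdvd_mdeg_between (k := L) ac _; first by rewrite ltnW.
have [j [b [ab deg_b eE]]] := mdvd_mdeg_pred ae ltac:(lia).
exists b, e; split=> //; first by lia.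
split; first by rewrite eE; apply: in_box_mu_pow_succ.
by rewrite deg_b prednK; [apply: mingens_mu_pow | lia].
Qed.

Lemma mpow_box_mingen L a w : mdeg a < L -> mpow I L w -> mdvd (mu_pow d a) w ->
  exists b m, [/\ mdvd a b, (mdeg b).+1 = L, box_mingen b m & mdvd m w].
Proof.
move=> aL Iw aw; have [m Im mw] := mingens_exists Iw.
have [b deg_b m_box] := goodI.2 L ltac:(lia) m Im.
have {deg_b}deg_b : (mdeg b).+1 = L by rewrite (deg_b : mdeg b = _); lia.
have [ab|/not_mdvd [i lt_bai]] := classic (mdvd a b).
  by exists b, m; split=> //; split; rewrite ?deg_b.
pose c q := maxn (a q) (b q).
have ac : mdvd a c by move=> q; rewrite leq_maxl.
have bc : mdvd b c by move=> q; rewrite leq_maxr.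
have cw : mdvd (mu_pow d c) w.
  move=> q; have := aw q; have := proj1 (andP (m_box q)); have := mw q.
  by rewrite /mu_pow /c /maxn; case: ltnP; lia.
have [|b' [e [ab' deg_b' box_e ec]]] := box_mingen_mu_pow (L := L) ac _.
  by rewrite aL -deg_b (mdeg_ltn bc (leq_trans lt_bai (ac i))).
exists b', (mu_pow d e); split=> //.
exact: mdvd_trans (mu_pow_mdvd d ec) cw.
Qed.
End GoodIdeal.

Theorem mainTheorem16 (n : nat) (I : mideal n) (d : mon n) (a : mon n) (t : nat) :
  good I d -> 0 < t ->
  forall v : mon n,
    mcolon (mpow I (\sum_(i < n) a i + t)) (mu_pow d a) v <->
    msum (fun tt : mon n => \sum_(i < n) tt i = t.-1)
         (fun tt => mmul (mu_pow d tt) (Isub I d (madd tt a))) v.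
Proof.
move=> goodI t_gt0 v; rewrite /mcolon -/(mdeg a); split.
- move=> Iv; have [|b [m [ab deg_b bm mv]]] := mpow_box_mingen goodI _ Iv (fun i => leq_addl _ _).
    lia.
  exists (msub b a); last by apply/mmul_Isub; rewrite msubK //; exists m.
  have := mdeg_madd (msub b a) a; rewrite msubK // => deg_ba.
  by change (mdeg (msub b a) = t.-1); lia.
- move=> [tt deg_tt /mmul_Isub [m [_ [Im _]] mv]]; apply: mpow_monideal mv.
  by move: Im; rewrite mdeg_madd (deg_tt : mdeg tt = _) -addSn prednK // addnC.
Qed.
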